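(* There is $n_0$ such that for every $n>n_0$ and every $H\in\{P_4, 2K_2\}$, $$\mathrm{IR}(H, K_{1,n}) \leq n + 2n\log^{-1/4} n.$$
   Context: All graphs are finite and simple. $P_4$ is the path on $4$ vertices, $2K_2$ is the disjoint union of two edges, $K_{1,n}$ is the star with $n$ edges. For graphs $F$, $H$, $G$, write $F \overset{\text{ind}}{\longrightarrow} (H,G)$ if for every coloring of the edges of $F$ with red and blue there is either a red induced copy of $H$ (a vertex set $S\subseteq V(F)$ with $F[S]\cong H$ and all edges of $F[S]$ red) or a blue induced copy of $G$ (defined analogously with blue). The induced Ramsey number $\mathrm{IR}(H,G)$ is the smallest number of vertices of a graph $F$ with $F \overset{\text{ind}}{\longrightarrow} (H,G)$. *)

From mathcomp Require Import all_boot.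
From Stdlib Require Import Reals.
Set Implicit Arguments. Unset Strict Implicit. Unset Printing Implicit Defensive.

Definition is_graph (V : finType) (e : rel V) : Prop :=
  symmetric e /\ irreflexive e.

(* A red/blue edge colouring of F = (V,e): a symmetric map c; c u v = true means
   the edge uv is red, false means blue (values on non-edges are irrelevant). *)
Definition is_coloring (V : finType) (c : V -> V -> bool) : Prop :=
  forall u v, c u v = c v u.

Definition mono_induced_copy (V : finType) (e : rel V) (c : V -> V -> bool)
  (col : bool) (W : finType) (h : rel W) : Prop :=
  exists f : W -> V, injective f /\
    (forall x y, e (f x) (f y) = h x y) /\
    (forall x y, h x y -> c (f x) (f y) = col).

Definition ind_arrow (V : finType) (e : rel V)
  (W1 : finType) (h : rel W1) (W2 : finType) (g : rel W2) : Prop :=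
  forall c : V -> V -> bool, is_coloring c ->
    mono_induced_copy e c true h \/ mono_induced_copy e c false g.

(* IR(H,G) <= x : some graph F with at most x vertices satisfies F -ind-> (H,G).
   (Unfolding of "the minimum number of vertices of such F is <= x".) *)
Definition IR_le (W1 : finType) (h : rel W1) (W2 : finType) (g : rel W2)
  (x : R) : Prop :=
  exists (V : finType) (e : rel V),
    is_graph e /\ (INR #|V| <= x)%R /\ ind_arrow e h g.

Definition P4 : rel 'I_4 :=
  fun i j => (i.+1 == j :> nat) || (j.+1 == i :> nat).

(* 2K_2 : edges {0,1} and {2,3}. *)
Definition twoK2 : rel 'I_4 :=
  fun i j => (i != j) && ((i./2 == j./2 :> nat)).

Definition K1n (n : nat) : rel 'I_n.+1 :=
  fun i j => (i == 0 :> nat) != (j == 0 :> nat).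

Definition star_bound (n : nat) : R :=
  (INR n + 2 * INR n * Rpower (ln (INR n)) (- (1/4)))%R.
Arguments K1n n : clear implicits.

(* The host graph is bipartite: its N left vertices are distinct d-subsets of
   an m-set, its m right vertices are the points, and a subset is joined to the
   points it avoids.  A point lies in at most C(m,d) - C(m-1,d) of the subsets,
   so it has at least n + r - 1 neighbours, while any K points have at most
   C(m-K,d) < r common neighbours.  In a colouring without a blue induced
   K_{1,n} centred at a point, every point c thus has a set R(c) of at least r
   red neighbours, and fewer than K points are joined to all of R(c).
   - Without a red induced P4, every point whose red neighbourhood meets R(c) is
     joined to all of R(c); so each left vertex lies in fewer than K of the sets
     R(c), and double counting gives m r <= N (K - 1).
   - Without a red induced 2K2, the relation "some vertex of R(c) misses c'" is
     irreflexive and antisymmetric, yet every c misses more than m - K points,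
     which forces 2K >= m + 3.
   Let P be least with n < 2^(P^4), d = 8 P^3, m least with C(m,d) >= 2n,
   K ~ P m / d and r ~ 3 n K / m.  Then m r > N (K - 1) and 2K < m + 3, while
   N + m - n <= 2n / P and 1 / P <= (ln n)^(-1/4). *)

From Stdlib Require Import Reals Lra.
From mathcomp Require Import all_boot zify.
Set Implicit Arguments. Unset Strict Implicit. Unset Printing Implicit Defensive.

Section RealBound.
Local Open Scope R_scope.

Lemma INR_expn a k : INR (a ^ k)%N = INR a ^ k.
Proof. by elim: k => [|k IH] //; rewrite expnS mulnE mult_INR IH. Qed.

Lemma ln2_lt1 : ln 2 < 1.
Proof.
rewrite -[X in _ < X](ln_exp 1); apply: ln_increasing; first lra.
by have := exp_ineq1 1 ltac:(lra); lra.
Qed.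

Lemma ln_lt_pow4 n P : (0 < n)%N -> (n < 2 ^ (P ^ 4))%N -> ln (INR n) < INR P ^ 4.
Proof.
move=> n0 hn; have hP4 : 0 <= INR (P ^ 4) by apply: pos_INR.
have hln2 : 0 < ln 2 by rewrite -ln_1; apply: ln_increasing; lra.
apply: (Rlt_le_trans _ (INR (P ^ 4) * ln 2)); last first.
  by rewrite -INR_expn; have := ln2_lt1; nra.
rewrite -ln_pow; last lra.
apply: ln_increasing; first by apply: lt_0_INR; apply/ltP.
by rewrite -[2]/(INR 2) -INR_expn; apply: lt_INR; apply/ltP.
Qed.

Lemma inv_le_Rpower_ln n P : (1 < n)%N -> (n < 2 ^ (P ^ 4))%N -> (0 < P)%N ->
  / INR P <= Rpower (ln (INR n)) (- (1 / 4)).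
Proof.
move=> n1 hn P0.
have hP : 0 < INR P by apply: lt_0_INR; apply/ltP.
have hL : 0 < ln (INR n).
  by rewrite -ln_1; apply: ln_increasing; [lra | apply: (lt_INR 1); apply/ltP].
have hP4 : Rpower (INR P ^ 4) (1 / 4) = INR P.
  by rewrite -(Rpower_pow 4 (INR P) hP) Rpower_mult /= (_ : _ * (1 / 4) = 1) ?Rpower_1 //; lra.
rewrite Rpower_Ropp; apply: Rinv_le_contravar; first exact: exp_pos.
rewrite -hP4; apply: Rle_Rpower_l; first lra.
by split=> //; apply: Rlt_le; apply: ln_lt_pow4 => //; apply: ltnW.
Qed.

Lemma INR_le_star_bound n P M : (1 < n)%N -> (n < 2 ^ (P ^ 4))%N -> (0 < P)%N ->
  (n <= M)%N -> (P * (M - n) <= 2 * n)%N -> INR M <= star_bound n.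
Proof.
move=> n1 hn P0 hnM hPM.
have hP : 0 < INR P by apply: lt_0_INR; apply/ltP.
have hexcess : INR P * INR (M - n) <= 2 * INR n.
  by rewrite -mult_INR -[2]/(INR 2) -mult_INR; apply: le_INR; apply/leP.
have hM : INR M = INR n + INR (M - n) by rewrite -plus_INR; congr INR; lia.
have n_ge0 : 0 <= INR n by apply: pos_INR.
have := inv_le_Rpower_ln n1 hn P0; rewrite /star_bound hM.
move: (Rpower _ _) => y hy.
have : INR (M - n) <= 2 * INR n * / INR P.
  by apply: (Rmult_le_reg_l (INR P)) => //; field_simplify; lra.
nra.
Qed.

End RealBound.

Lemma card_sum_mem (T : finType) (A : {set T}) : #|A| = \sum_x (x \in A).
Proof. by rewrite -sum1_card big_mkcond. Qed.

Lemma sum_card_transpose (I J : finType) (A : I -> {set J}) :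
  \sum_i #|A i| = \sum_j #|[set i | j \in A i]|.
Proof.
under eq_bigr do rewrite card_sum_mem.
rewrite exchange_big; apply: eq_bigr => j _.
by rewrite card_sum_mem; apply: eq_bigr => i _; rewrite inE.
Qed.

Lemma sum_card_antisym (T : finType) (U : T -> {set T}) :
  (forall x, x \notin U x) -> (forall x y, x \in U y -> y \notin U x) ->
  2 * \sum_x #|U x| <= #|T| * #|T|.-1.
Proof.
move=> irrU antiU.
have -> : 2 * \sum_x #|U x| = \sum_x \sum_y ((y \in U x) + (x \in U y)).
  rewrite mul2n -addnn {2}sum_card_transpose -big_split /=.
  apply: eq_bigr => x _; rewrite big_split /= -card_sum_mem; congr (_ + _).
  by rewrite card_sum_mem; apply: eq_bigr => y _; rewrite inE.
apply: (@leq_trans (\sum_(x : T) #|T|.-1)); last by rewrite sum_nat_const.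
apply: leq_sum => x _.
rewrite -(cardsC1 x) card_sum_mem; apply: leq_sum => y _.
rewrite !inE; have [->|_] := eqVneq y x; first by rewrite (negbTE (irrU x)).
by case: (boolP (y \in U x)) => [/antiU/negbTE -> | _]; case: (x \in U y).
Qed.

Section Bipartite.

Variables (N m : nat) (adj : 'I_N -> 'I_m -> bool).

Definition bipartite : rel ('I_N + 'I_m) := fun u v =>
  match u, v with
  | inl i, inr c | inr c, inl i => adj i c
  | _, _ => false
  end.

Lemma bipartite_graph : is_graph bipartite.
Proof. by split; [case=> [i|c] [j|d] | case]. Qed.

Definition common_nbhd (S : {set 'I_m}) := [set i | [forall c in S, adj i c]].

Variables (n r K : nat).
Hypothesis card_nbhd_ge : forall c, n + r - 1 <= #|[set i | adj i c]|.
Hypothesis card_common_nbhd_lt : forall S : {set 'I_m}, K <= #|S| -> #|common_nbhd S| < r.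

Section Colouring.

Variable col : ('I_N + 'I_m)%type -> ('I_N + 'I_m)%type -> bool.
Hypothesis col_sym : is_coloring col.

Definition red_nbhd c := [set i | adj i c && col (inl i) (inr c)].
Definition blue_nbhd c := [set i | adj i c && ~~ col (inl i) (inr c)].

Lemma blue_star_copy c : n <= #|blue_nbhd c| -> mono_induced_copy bipartite col false (K1n n).
Proof.
move=> hc.
pose f x := if unlift ord0 x is Some j then inl (enum_val (widen_ord hc j)) else inr c.
have blue j : adj (enum_val (widen_ord hc j)) c && ~~ col (inl (enum_val (widen_ord hc j))) (inr c).
  by have := enum_valP (widen_ord hc j); rewrite inE.
exists f; split; [|split] => [x y|x y|x y]; rewrite /f /K1n.
all: case: (unliftP ord0 x) => [j|] ->; case: (unliftP ord0 y) => [k|] -> //=.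
- by case=> /enum_val_inj /(congr1 val) /= /val_inj ->.
- by case/andP: (blue j).
- by case/andP: (blue k).
- by case/andP: (blue j) => _ /negbTE.
- by case/andP: (blue k) => _ /negbTE; rewrite col_sym.
Qed.

Lemma card_red_nbhd_ge c : #|blue_nbhd c| < n -> r <= #|red_nbhd c|.
Proof.
have := cardsID [set i | col (inl i) (inr c)] [set i | adj i c].
have -> : [set i | adj i c] :&: [set i | col (inl i) (inr c)] = red_nbhd c.
  by apply/setP => i; rewrite !inE.
have -> : [set i | adj i c] :\: [set i | col (inl i) (inr c)] = blue_nbhd c.
  by apply/setP => i; rewrite !inE andbC.
by have := card_nbhd_ge c; lia.
Qed.

Lemma red_P4_copy c1 c2 i j : c1 != c2 -> i \in red_nbhd c1 -> j \in red_nbhd c1 ->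
  j \in red_nbhd c2 -> ~~ adj i c2 -> mono_induced_copy bipartite col true P4.
Proof.
move=> c12; rewrite !inE => /andP[ai1 ri1] /andP[aj1 rj1] /andP[aj2 rj2] nai2.
have ij : i != j by apply: contraNneq nai2 => ->.
exists (tnth [tuple inl i; inr c1; inl j; inr c2]); split; [|split].
- apply/tuple_uniqP; rewrite /= !inE !(inj_eq inl_inj) !(inj_eq inr_inj).
  by rewrite (negbTE ij) (negbTE c12).
- by move=> [[|[|[|[|x]]]] hx] [[|[|[|[|y]]]] hy] //=; rewrite ?ai1 ?aj1 ?aj2 ?(negbTE nai2).
- move=> [[|[|[|[|x]]]] hx] [[|[|[|[|y]]]] hy] //= _;
  by rewrite /= ?ri1 ?rj1 ?rj2 // col_sym /= ?ri1 ?rj1 ?rj2.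
Qed.

Lemma red_2K2_copy c1 c2 i j : i \in red_nbhd c1 -> j \in red_nbhd c2 ->
  ~~ adj i c2 -> ~~ adj j c1 -> mono_induced_copy bipartite col true twoK2.
Proof.
rewrite !inE => /andP[ai1 ri1] /andP[aj2 rj2] nai2 naj1.
have ij : i != j by apply: contraNneq naj1 => <-.
have c12 : c1 != c2 by apply: contraNneq nai2 => <-.
exists (tnth [tuple inl i; inr c1; inl j; inr c2]); split; [|split].
- apply/tuple_uniqP; rewrite /= !inE !(inj_eq inl_inj) !(inj_eq inr_inj).
  by rewrite (negbTE ij) (negbTE c12).
- by move=> [[|[|[|[|x]]]] hx] [[|[|[|[|y]]]] hy] //=; rewrite ?(negbTE nai2) ?(negbTE naj1).
- move=> [[|[|[|[|x]]]] hx] [[|[|[|[|y]]]] hy] //= _;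
  by rewrite /= ?ri1 ?rj2 // col_sym /= ?ri1 ?rj2.
Qed.

Lemma blue_star_or_red_nbhds :
  mono_induced_copy bipartite col false (K1n n) \/ forall c, r <= #|red_nbhd c|.
Proof.
have [/existsP[c hc]|/existsPn small] := boolP [exists c, n <= #|blue_nbhd c|].
  by left; apply: blue_star_copy hc.
by right=> c; apply: card_red_nbhd_ge; rewrite ltnNge small.
Qed.

Hypothesis card_red_nbhd_large : forall c, r <= #|red_nbhd c|.

Lemma card_lt_of_red_nbhd_sub c (S : {set 'I_m}) :
  red_nbhd c \subset common_nbhd S -> #|S| < K.
Proof.
move/subset_leq_card; have := card_red_nbhd_large c.
by case: (leqP K #|S|) => // /card_common_nbhd_lt; lia.
Qed.

Lemma card_red_incidence_le :
  (forall c1 c2 i j, c1 != c2 -> i \in red_nbhd c1 -> j \in red_nbhd c1 ->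
     j \in red_nbhd c2 -> adj i c2) ->
  forall i, #|[set c | i \in red_nbhd c]| <= K.-1.
Proof.
move=> noP4 i.
have [->|[c0 ic0]] := set_0Vmem [set c | i \in red_nbhd c]; first by rewrite cards0.
rewrite inE in ic0.
pose S := [set c | [exists j, (j \in red_nbhd c0) && (j \in red_nbhd c)]].
have sub : [set c | i \in red_nbhd c] \subset S.
  by apply/subsetP => c; rewrite inE => ic; rewrite inE; apply/existsP; exists i; rewrite ic0 ic.
suff : #|S| < K by have := subset_leq_card sub; lia.
apply: (@card_lt_of_red_nbhd_sub c0); apply/subsetP => j jc0; rewrite inE.
apply/forall_inP => c; rewrite inE => /existsP[j' /andP[j'c0 j'c]].
have [<-|c0c] := eqVneq c0 c; first by move: jc0; rewrite inE => /andP[].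
exact: noP4 c0c jc0 j'c0 j'c.
Qed.

Definition missed c := [set c' | [exists i in red_nbhd c, ~~ adj i c']].

Lemma card_missed_gt c : m < K + #|missed c|.
Proof.
have : #|~: missed c| < K.
  apply: (@card_lt_of_red_nbhd_sub c); apply/subsetP => i ic; rewrite inE.
  apply/forall_inP => c'; rewrite !inE => /exists_inPn /(_ i ic).
  by rewrite negbK.
by have := cardsC (missed c); rewrite card_ord; lia.
Qed.

Lemma missed_irrefl c : c \notin missed c.
Proof.
by rewrite inE; apply/exists_inPn => i; rewrite inE negbK => /andP[].
Qed.

Lemma missed_antisym :
  (forall c1 c2 i j, i \in red_nbhd c1 -> j \in red_nbhd c2 -> ~~ adj i c2 -> adj j c1) ->
  forall c1 c2, c1 \in missed c2 -> c2 \notin missed c1.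
Proof.
move=> no2K2 c1 c2; rewrite !inE => /exists_inP[j jc2 naj1].
apply/exists_inPn => i ic1; rewrite negbK; apply: contraNT naj1.
exact: no2K2.
Qed.

End Colouring.

Lemma bipartite_arrow_P4 : N * K.-1 < m * r -> ind_arrow bipartite P4 (K1n n).
Proof.
move=> NK col col_sym.
have [blue|red] := blue_star_or_red_nbhds col_sym; [by right | left].
have [/existsP[c1 /existsP[c2 /existsP[i /existsP[j /and5P[]]]]]|noP4] := boolP
  [exists c1, exists c2, exists i, exists j, [&& c1 != c2, i \in red_nbhd col c1,
     j \in red_nbhd col c1, j \in red_nbhd col c2 & ~~ adj i c2]].
  exact: red_P4_copy.
have incidence_le := card_red_incidence_le red.
suff : m * r <= N * K.-1 by lia.
apply: (@leq_trans (\sum_c #|red_nbhd col c|)).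
  by rewrite -[m in m * r]card_ord -sum_nat_const; apply: leq_sum => c _.
rewrite sum_card_transpose -[N in N * _]card_ord -sum_nat_const.
apply: leq_sum => i _; apply: incidence_le => c1 c2 i' j c12 ic1 jc1 jc2.
apply: contraNT noP4 => nai; apply/existsP; exists c1; apply/existsP; exists c2.
by apply/existsP; exists i'; apply/existsP; exists j; rewrite c12 ic1 jc1 jc2 nai.
Qed.

Lemma bipartite_arrow_2K2 : 0 < m -> 2 * K < m + 3 -> ind_arrow bipartite twoK2 (K1n n).
Proof.
move=> m0 Km col col_sym.
have [blue|red] := blue_star_or_red_nbhds col_sym; [by right | left].
have [/existsP[c1 /existsP[c2 /existsP[i /existsP[j /and4P[]]]]]|no2K2] := boolP
  [exists c1, exists c2, exists i, exists j, [&& i \in red_nbhd col c1,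
     j \in red_nbhd col c2, ~~ adj i c2 & ~~ adj j c1]].
  exact: red_2K2_copy.
have anti : forall c1 c2, c1 \in missed col c2 -> c2 \notin missed col c1.
  apply: missed_antisym => c1 c2 i j ic1 jc2 nai; apply: contraNT no2K2 => naj.
  apply/existsP; exists c1; apply/existsP; exists c2.
  by apply/existsP; exists i; apply/existsP; exists j; rewrite ic1 jc2 nai naj.
have := sum_card_antisym (@missed_irrefl col) anti; rewrite card_ord.
have : \sum_(c : 'I_m) m.+1 <= \sum_c (K + #|missed col c|).
  by apply: leq_sum => c _; apply: card_missed_gt.
rewrite big_split /= !sum_nat_const card_ord.
move: (\sum_c _) => s le_s le_2s.
have : m * (m + 3) <= m * (2 * K) by nia.
by rewrite leq_pmul2l // leqNgt Km.
Qed.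

End Bipartite.

Lemma exists_injective_draws N m d : N <= 'C(m, d) ->
  exists g : 'I_N -> {set 'I_m}, injective g /\ forall i, #|g i| = d.
Proof.
move=> hN; have hD : N <= #|[set A : {set 'I_m} | #|A| == d]| by rewrite card_draws card_ord.
exists (fun i => enum_val (widen_ord hD i)); split.
  by move=> i j /enum_val_inj /(congr1 val) /= /val_inj.
by move=> i; have := enum_valP (widen_ord hD i); rewrite inE => /eqP.
Qed.

Definition avoids N m (g : 'I_N -> {set 'I_m}) i c := c \notin g i.

Section AvoidingSubsets.

Variables (N m d : nat) (g : 'I_N -> {set 'I_m}).
Hypotheses (g_inj : injective g) (card_g : forall i, #|g i| = d).

Lemma card_common_avoids_le S : #|common_nbhd (avoids g) S| <= 'C(m - #|S|, d).
Proof.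
have -> : m - #|S| = #|~: S| by rewrite [#|~: S|]cardsCs setCK card_ord.
rewrite -(card_imset _ g_inj) -cards_draws.
apply: subset_leq_card; apply/subsetP => _ /imsetP[i hi ->].
rewrite inE card_g eqxx andbT; apply/subsetP => c gic; rewrite inE.
by apply: contraL gic => cS; move: hi; rewrite inE => /forall_inP/(_ c cS).
Qed.

Lemma card_avoids_ge c : N - ('C(m, d) - 'C(m.-1, d)) <= #|[set i | avoids g i c]|.
Proof.
have contain_c : #|[set i | c \in g i]| <= 'C(m, d) - 'C(m.-1, d).
  rewrite -(card_imset _ g_inj).
  have := cardsID [set A : {set 'I_m} | c \in A] [set A : {set 'I_m} | #|A| == d].
  have -> : [set A : {set 'I_m} | #|A| == d] :\: [set A : {set 'I_m} | c \in A] =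
            [set A : {set 'I_m} | (A \subset [set~ c]) && (#|A| == d)].
    apply/setP => A; rewrite !inE; congr (_ && _).
    by rewrite subsets_disjoint setCK disjoint_sym disjoints1.
  rewrite cards_draws cardsC1 card_draws !card_ord.
  have : g @: [set i | c \in g i] \subset
      [set A : {set 'I_m} | #|A| == d] :&: [set A : {set 'I_m} | c \in A].
    by apply/subsetP => _ /imsetP[i hi ->]; rewrite !inE card_g eqxx; rewrite inE in hi.
  move/subset_leq_card; lia.
have := cardsC [set i | c \in g i]; rewrite card_ord.
have -> : ~: [set i | c \in g i] = [set i | avoids g i c] by apply/setP => i; rewrite !inE.
lia.
Qed.

End AvoidingSubsets.

Lemma IR_le_avoiding_subsets n N m d r K (x : R) :
  N <= 'C(m, d) -> n + r - 1 <= N - ('C(m, d) - 'C(m.-1, d)) ->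
  'C(m - K, d) < r -> N * K.-1 < m * r -> 0 < m -> 2 * K < m + 3 ->
  Rle (INR (N + m)) x -> IR_le P4 (K1n n) x /\ IR_le twoK2 (K1n n) x.
Proof.
move=> hN hdeg hK hNK m0 Km hx.
have [g [g_inj card_g]] := exists_injective_draws hN.
have deg c : n + r - 1 <= #|[set i | avoids g i c]|.
  exact: leq_trans hdeg (card_avoids_ge g_inj card_g c).
have common (S : {set 'I_m}) : K <= #|S| -> #|common_nbhd (avoids g) S| < r.
  move=> KS; apply: leq_ltn_trans (card_common_avoids_le g_inj card_g S) _.
  by apply: leq_ltn_trans hK; apply: leq_bin2l; lia.
have card_V : #|{: 'I_N + 'I_m}| = N + m by rewrite card_sum !card_ord.
split; exists ('I_N + 'I_m)%type, (bipartite (avoids g)); rewrite card_V.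
  by split; [apply: bipartite_graph | split=> //; apply: bipartite_arrow_P4 deg common hNK].
by split; [apply: bipartite_graph | split=> //; apply: bipartite_arrow_2K2 deg common m0 Km].
Qed.

Lemma leq_expn2r m n e : m <= n -> m ^ e <= n ^ e.
Proof. by case: e => [|e] h; rewrite ?expn0 ?leq_exp2r. Qed.

Lemma expn4_le_exp2 x : 64 <= x -> 2 ^ 22 * x ^ 4 <= 2 ^ x.
Proof.
elim: x => [|x IH] x64; first by exfalso; move: x64.
move: x64; rewrite leq_eqVlt => /predU1P[<-|x64].
  by rewrite -[X in X ^ 4]/(2 ^ 6) -expnM -expnD leq_exp2l.
have succ4 : x.+1 ^ 4 <= 2 * x ^ 4 by rewrite !expnS expn0 !muln1; move: x64; clear; nia.
rewrite [2 ^ x.+1]expnS; apply: leq_trans _ (leq_mul (leqnn 2) (IH x64)).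
by rewrite mulnCA leq_mul2l succ4 orbT.
Qed.

Lemma leq_bin_addn x k j : 'C(x, k) <= 'C(x + j, k + j).
Proof. by elim: j => [|j IH]; rewrite ?addn0 // !addnS binS (leq_trans IH) ?leq_addl. Qed.

Lemma bin_le_expn m d : 'C(m, d) <= m ^ d.
Proof.
have ffact_le : m ^_ d <= m ^ d.
  elim: d m => [|d IH] m; rewrite ?ffactnS ?expnS // leq_mul2l.
  by rewrite (leq_trans (IH _)) ?orbT // leq_expn2r // leq_pred.
by rewrite (leq_trans _ ffact_le) // -bin_ffact leq_pmulr ?fact_gt0.
Qed.

Lemma expn_le_of_bin_ge b j m d : 0 < d -> b ^ (j * d) <= 'C(m, d) -> b ^ j <= m.
Proof.
move=> d0 le_bin; rewrite leqNgt; apply/negP => lt_m.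
have := leq_trans le_bin (bin_le_expn m d).
by rewrite expnM leqNgt ltn_exp2r ?lt_m.
Qed.

Lemma bin_pred_mul_le x m d : x <= m -> 'C(x.-1, d) * m <= 'C(x, d) * (m - d).
Proof.
move=> xm; case: (posnP x) => [->|x0].
  by rewrite bin0n; case: eqP => [->|]; rewrite ?subn0 ?mul1n ?mul0n.
have key : (x - d) * m <= x * (m - d) by case: (leqP d x) => dx; nia.
rewrite -(leq_pmul2l x0) mulnA mul_bin_down mulnAC mulnCA [_ * 'C(x, d)]mulnC.
by rewrite leq_mul2l key orbT.
Qed.

Lemma bin_subn_mul_le m d i : i <= m -> 'C(m - i, d) * m ^ i <= 'C(m, d) * (m - d) ^ i.
Proof.
elim: i => [|i IH] im; first by rewrite subn0 !expn0 !muln1.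
have step := bin_pred_mul_le d (leq_subr i m).
rewrite subnS !expnS mulnA; apply: leq_trans (leq_mul step (leqnn _)) _.
by rewrite mulnAC [(m - d) * _]mulnC mulnA leq_mul2r (IH (ltnW im)) orbT.
Qed.

Lemma bernoulli_expn x y a : x ^ a + a * y * x ^ a.-1 <= (x + y) ^ a.
Proof.
elim: a => [|a IH]; first by rewrite !expn0 mul0n addn0.
rewrite [(x + y) ^ a.+1]expnS; apply: leq_trans (leq_mul (leqnn (x + y)) IH).
case: a {IH} => [|a]; first by rewrite !expn0 !expn1 mul0n !addn0 muln1 mul1n muln1.
by rewrite /= !expnS; move: (x ^ a) => z; nia.
Qed.

Lemma double_expn_le m d a : d <= m -> m - d <= a * d -> 0 < a -> 2 * (m - d) ^ a <= m ^ a.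
Proof.
move=> dm le_ad a0; have := bernoulli_expn (m - d) d a; rewrite subnK //.
apply: leq_trans; case: a a0 le_ad => [//|a] _ le_ad /=.
by rewrite expnS; move: ((m - d) ^ a) => z; nia.
Qed.

Lemma bin_le_double_pred m d : 2 * d <= m -> 'C(m, d) <= 2 * 'C(m.-1, d).
Proof.
move=> dm; case: (posnP m) => [m0|m0]; first by rewrite m0 (_ : d = 0) //; lia.
rewrite -(leq_pmul2l m0) mulnCA mul_bin_down mulnA leq_mul2r; apply/orP; right; lia.
Qed.

Lemma bin_sub_pred_mul m d : d <= m -> ('C(m, d) - 'C(m.-1, d)) * m = 'C(m, d) * d.
Proof.
move=> dm; rewrite mulnBl (mulnC 'C(m.-1, d)) mul_bin_down mulnC -mulnBl subKn //.
by rewrite mulnC.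
Qed.

Lemma sqr_subn_le_bin m d : 2 <= d <= m -> (m - d) * (m - d) <= 2 * 'C(m.-1, d).
Proof.
case/andP=> d2 dm; have := leq_bin_addn (m - d).+1 2 (d - 2).
have -> : (m - d).+1 + (d - 2) = m.-1 by lia.
rewrite subnKC // bin2 /=; move: (m - d) => w; nia.
Qed.

Lemma exists_bin_ge k d : 0 < d -> exists m, k <= 'C(m, d).
Proof.
move=> d0; exists (k + d); have := leq_bin_addn k.+1 1 d.-1.
by rewrite bin1 add1n addSnnS prednK // => /ltnW.
Qed.

Section HostSizes.

Variables n P : nat.
Hypotheses (P_large : 520 <= P) (n_ge : 2 ^ (P.-1 ^ 4) <= n) (n_lt : n < 2 ^ (P ^ 4)).

Let d := 8 * P ^ 3.

Let expn3 x : x ^ 3 = x * x * x. Proof. by rewrite !expnS expn0 muln1 mulnA. Qed.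
Let expn4 x : x ^ 4 = x * x * x * x. Proof. by rewrite !expnS expn0 muln1 !mulnA. Qed.

Lemma param_d_gt0 : 0 < d.
Proof. by rewrite /d expn3; nia. Qed.

Lemma param_n_large : 2 ^ 22 * P ^ 4 <= n.
Proof.
have P4 : P <= P.-1 ^ 4 by rewrite expn4; nia.
apply: leq_trans n_ge; apply: leq_trans (expn4_le_exp2 _); last by lia.
by rewrite leq_mul2l leq_expn2r ?orbT.
Qed.

Let m := ex_minn (exists_bin_ge (2 * n) param_d_gt0).

Lemma param_bin_m_ge : 2 * n <= 'C(m, d).
Proof. by rewrite /m; case: ex_minnP. Qed.

Lemma param_m_gt0 : 0 < m.
Proof.
have := param_bin_m_ge; have := param_n_large; have := param_d_gt0.
by case: (posnP m) => [->|//]; rewrite bin0n; case: eqP => [->|]; lia.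
Qed.

Lemma param_bin_pred_m_lt : 'C(m.-1, d) < 2 * n.
Proof.
move: param_m_gt0; rewrite /m; case: ex_minnP => x _ min_x x0.
by rewrite ltnNge; apply/negP => /min_x; rewrite -{1}(prednK x0) ltnn.
Qed.

Lemma param_m_large : 64 * P ^ 4 <= m.
Proof.
pose j := (P - 4) %/ 8.
have j64 : 64 <= j by rewrite leq_divRL //; lia.
have Pj : P <= 16 * j by have := ltn_ceil (P - 4) (isT : 0 < 8); lia.
have jd : j * d <= P.-1 ^ 4.
  apply: (@leq_trans ((P - 4) * P ^ 3)).
    by rewrite /d mulnA leq_mul2r leq_divM orbT.
  have [k ->] : exists k, P = k + 4 by exists (P - 4); lia.
  rewrite addnK (_ : (k + 4).-1 = k + 3) ?expn3 ?expn4; [nia | lia].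
have two_j : 2 ^ j <= m.
  apply: (expn_le_of_bin_ge param_d_gt0); apply: leq_trans param_bin_m_ge.
  by apply: leq_trans (leq_trans _ n_ge) (leq_pmull _ (isT : 0 < 2)); rewrite leq_exp2l.
have Pj4 : P ^ 4 <= 2 ^ 16 * j ^ 4.
  by rewrite (_ : 16 = 4 * 4) // expnM -expnMn leq_expn2r.
have e22 : 2 ^ 22 = 2 ^ 6 * 2 ^ 16 by rewrite -expnD.
apply: leq_trans (leq_trans (expn4_le_exp2 j64) two_j).
by rewrite e22 -mulnA leq_mul2l Pj4 orbT.
Qed.

Lemma param_d_le : 2 * d <= m.
Proof.
have : P ^ 3 <= P ^ 4 by rewrite leq_pexp2l //; lia.
by have := param_m_large; rewrite /d; lia.
Qed.

Lemma param_bin_m_lt : 'C(m, d) < 4 * n.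
Proof.
apply: leq_ltn_trans (bin_le_double_pred param_d_le) _.
by have := param_bin_pred_m_lt; lia.
Qed.

Lemma param_m_small : 8 * P * m <= n.
Proof.
have w2 : (m - d) * (m - d) < 4 * n.
  apply: leq_ltn_trans (sqr_subn_le_bin _) _; last by have := param_bin_pred_m_lt; lia.
  by have := param_d_le; have := param_d_gt0; rewrite /d; lia.
have P2 : 1024 * (P * P) <= n.
  have : P * P <= P ^ 4 by rewrite expn4; nia.
  by have := param_n_large; lia.
have Pw : 16 * P * (m - d) <= n.
  rewrite leqNgt; apply/negP => lt_n; have := ltn_mul lt_n lt_n.
  move: (m - d) w2 => w w2; nia.
have : 128 * P ^ 4 <= n by have := param_n_large; lia.
by rewrite /d expn3 expn4 in Pw *; have := param_d_le; rewrite /d expn3; nia.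
Qed.

Let a := m %/ d + 1.
Let K := P * a.

Lemma param_K_lower : P * m <= K * d.
Proof.
have ad : m < a * d by rewrite /a addn1 ltn_ceil // param_d_gt0.
by rewrite /K -mulnA leq_mul2l (ltnW ad) orbT.
Qed.

Lemma param_K_upper : 4 * P ^ 2 * K <= m.
Proof.
have ad : a * d <= m + d by rewrite /a mulnDl mul1n leq_add2r leq_divM.
have : 2 * (4 * P ^ 2 * K) = a * d by rewrite /K /d !expnS expn0; lia.
by have := param_d_le; lia.
Qed.

Let r := 3 * n * K %/ m + 1.

Lemma param_r_lower : 3 * n * K < r * m.
Proof. by rewrite /r addn1 ltn_ceil // param_m_gt0. Qed.

Lemma param_r_small : 4 * (P * r) <= n.
Proof.
have rm : r * m <= 3 * n * K + m by rewrite /r mulnDl mul1n leq_add2r leq_divM.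
have r4 : 4 * P ^ 2 * r <= 3 * n + 4 * P ^ 2.
  rewrite -(leq_pmul2r param_m_gt0) mulnDl -mulnA.
  apply: leq_trans (leq_mul (leqnn _) rm) _; rewrite mulnDr leq_add2r.
  by rewrite mulnCA leq_mul2l param_K_upper orbT.
have Pn : 520 * n <= P * n by rewrite leq_mul2r P_large orbT.
have n22 : 2 ^ 22 * P ^ 2 <= n.
  by apply: leq_trans param_n_large; rewrite leq_mul2l leq_pexp2l ?orbT //; lia.
rewrite -(leq_pmul2l (_ : 0 < P)); last by lia.
by move: r4 n22; rewrite -mulnn; lia.
Qed.

Let T := 'C(m, d) - 'C(m.-1, d).

Lemma param_T_small : 2 * P * T < n.
Proof.
have dm : d <= m by have := param_d_le; lia.
rewrite -(ltn_pmul2r param_m_gt0) -mulnA bin_sub_pred_mul //.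
have -> : 2 * P * ('C(m, d) * d) = 'C(m, d) * (16 * P ^ 4) by rewrite /d !expnS expn0; lia.
have P4 : 0 < 16 * P ^ 4 by rewrite muln_gt0 expn_gt0; lia.
apply: leq_trans (_ : 4 * n * (16 * P ^ 4) <= _); first by rewrite ltn_pmul2r ?param_bin_m_lt.
have := leq_mul (leqnn n) param_m_large; move: (P ^ 4) => Q; lia.
Qed.

Lemma param_bin_avoid_exp_lt : 'C(m - K, d) * 2 ^ P < 4 * n.
Proof.
have dm : d <= m by have := param_d_le; lia.
have Km : K <= m.
  by apply: leq_trans param_K_upper; rewrite leq_pmull // muln_gt0 expn_gt0; lia.
have a0 : 0 < a by rewrite /a addn1.
have ad : m - d <= a * d.
  by rewrite (leq_trans (leq_subr d m)) // ltnW // /a addn1 ltn_ceil // param_d_gt0.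
have powP : 2 ^ P * (m - d) ^ K <= m ^ K.
  by rewrite /K (mulnC P a) !expnM -expnMn leq_expn2r // double_expn_le.
have w0 : 0 < (m - d) ^ K.
  by rewrite expn_gt0 subn_gt0; have := param_d_le; have := param_d_gt0; lia.
rewrite -(ltn_pmul2r w0) -mulnA.
apply: leq_ltn_trans (leq_mul (leqnn _) powP) _.
by apply: leq_ltn_trans (bin_subn_mul_le d Km) _; rewrite ltn_pmul2r // param_bin_m_lt.
Qed.

Lemma param_bin_avoid_lt : 'C(m - K, d) < r.
Proof.
set X := 'C(m - K, d).
have d4 : 4 * d <= P * 2 ^ P.
  apply: leq_trans _ (leq_pmull _ (_ : 0 < P)); last by lia.
  apply: leq_trans _ (expn4_le_exp2 (_ : 64 <= P)); last by lia.
  have : P ^ 3 * 32 <= P ^ 4 by rewrite [P ^ 4]expnSr leq_mul2l; lia.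
  by rewrite /d; move: (P ^ 3) (P ^ 4) => P3 P4; lia.
have Xm : X * m * (4 * d) < n * K * (4 * d).
  have Kd0 : 0 < K * d by rewrite muln_gt0 param_d_gt0 andbT /K /a muln_gt0 addn1 andbT; lia.
  have KPm : X * 2 ^ P * (P * m) <= X * 2 ^ P * (K * d).
    by rewrite leq_mul2l param_K_lower orbT.
  have XP : X * 2 ^ P * (K * d) < 4 * n * (K * d).
    by rewrite ltn_pmul2r ?param_bin_avoid_exp_lt.
  have := leq_mul (leqnn (X * m)) d4.
  by move: KPm XP; move: (2 ^ P) X => Q Y; lia.
rewrite ltn_pmul2r in Xm; last by rewrite muln_gt0 param_d_gt0.
rewrite -(ltn_pmul2r param_m_gt0); apply: leq_ltn_trans _ param_r_lower; lia.
Qed.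

Lemma avoiding_subsets_parameters :
  exists N m d r K, N <= 'C(m, d) /\ n + r - 1 <= N - ('C(m, d) - 'C(m.-1, d)) /\
    'C(m - K, d) < r /\ N * K.-1 < m * r /\ 0 < m /\ 2 * K < m + 3 /\
    n <= N + m /\ P * (N + m - n) <= 2 * n.
Proof.
have Te : T = 'C(m, d) - 'C(m.-1, d) by [].
move: param_bin_m_ge param_bin_avoid_lt param_r_lower param_m_gt0 param_K_upper
  param_r_small param_T_small param_m_small.
clearbody T r K a m d => Cm X rm m0 K4m Pr PT Pm.
have rT : r + T <= n.
  have : r <= P * r by apply: leq_pmull; lia.
  have : T <= P * T by apply: leq_pmull; lia.
  lia.
have K4 : K <= 4 * P ^ 2 * K by rewrite leq_pmull // muln_gt0 expn_gt0; lia.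
have NK : (n + r + T - 1) * K.-1 <= 2 * n * K by apply: leq_mul; [lia | exact: leq_pred].
have excess : P * (n + r + T - 1 + m - n) <= P * (r + T + m) by rewrite leq_mul2l; lia.
exists (n + r + T - 1), m, d, r, K; split; [lia | split; [lia | split; [exact: X |]]].
split; [lia | split; [exact: m0 | split; [lia | split; [lia |]]]].
by move: excess; rewrite !mulnDr; lia.
Qed.

End HostSizes.

Lemma exists_pow4_bracket n : 2 ^ (520 ^ 4) < n ->
  exists2 P, 520 <= P & 2 ^ (P.-1 ^ 4) <= n < 2 ^ (P ^ 4).
Proof.
have ex_P : exists P, n < 2 ^ (P ^ 4).
  exists n; apply: leq_trans (ltn_expl n (isT : 1 < 2)) _.
  by rewrite leq_exp2l //; case: n => // n; rewrite -{1}(expn1 n.+1) leq_pexp2l.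
move=> n_gt; case: (ex_minnP ex_P) => P n_lt min_P.
have P_large : 520 <= P.
  rewrite leqNgt; apply/negP => /ltnW /(leq_expn2r 4).
  rewrite -(leq_exp2l _ _ (isT : 1 < 2)) => /leq_ltn_trans/(_ n_gt).
  by rewrite ltnNge (ltnW n_lt).
exists P => //; rewrite n_lt andbT leqNgt; apply/negP => /min_P.
by rewrite -{1}(prednK (leq_trans (isT : 0 < 520) P_large)) ltnn.
Qed.

Theorem lemma5 : exists n0 : nat, forall n : nat, (n0 < n)%nat ->
  IR_le P4 (K1n n) (star_bound n) /\ IR_le twoK2 (K1n n) (star_bound n).
Proof.
exists (2 ^ (520 ^ 4)) => n n_gt.
have n1 : 1 < n by apply: leq_ltn_trans _ n_gt; rewrite expn_gt0.
have [P P_large /andP[n_ge n_lt]] := exists_pow4_bracket n_gt.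
have [N [m [d [r [K [hN [hdeg [hK [hNK [m0 [Km [nM excess]]]]]]]]]]]] :=
  avoiding_subsets_parameters P_large n_ge n_lt.
apply: (IR_le_avoiding_subsets hN hdeg hK hNK m0 Km).
exact: INR_le_star_bound n1 n_lt (leq_trans (isT : 0 < 520) P_large) nM excess.
Qed.
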